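(* Any finite product of matrices from the set $\{A_{(0,0)},A_{(1,0)},A_{(0,1)},A_{(1,1)}\}$ has at most one row all of whose entries are zero.
   Context: $A_{(0,0)}=\begin{pmatrix}3&1&1&1\\0&1&0&0\\0&0&1&0\\0&0&0&1\end{pmatrix}$, $A_{(1,0)}=\begin{pmatrix}1&0&1&0\\1&3&0&1\\0&0&0&0\\0&0&1&1\end{pmatrix}$, $A_{(0,1)}=\begin{pmatrix}1&1&0&0\\0&0&0&0\\1&0&3&1\\0&1&0&1\end{pmatrix}$, $A_{(1,1)}=\begin{pmatrix}1&0&0&0\\0&1&0&0\\0&0&1&0\\1&1&1&3\end{pmatrix}$. *)

From mathcomp Require Import all_boot all_order all_algebra.
Set Implicit Arguments. Unset Strict Implicit. Unset Printing Implicit Defensive.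
Import GRing.Theory.
Local Open Scope ring_scope.


(* The four 4x4 integer matrices A_(a,b), indexed by (a,b) in bool * bool
   (false = 0, true = 1). *)
Definition mxA (ab : bool * bool) : 'M[int]_4 :=
  match ab with
  | (false, false) => \matrix_(i < 4, j < 4) (
      nth [::] ([:: [:: 3; 1; 1; 1]; [:: 0; 1; 0; 0]; [:: 0; 0; 1; 0]; [:: 0; 0; 0; 1]] : seq (seq int)) i)`_j
  | (true, false) => \matrix_(i < 4, j < 4) (
      nth [::] ([:: [:: 1; 0; 1; 0]; [:: 1; 3; 0; 1]; [:: 0; 0; 0; 0]; [:: 0; 0; 1; 1]] : seq (seq int)) i)`_j
  | (false, true) => \matrix_(i < 4, j < 4) (
      nth [::] ([:: [:: 1; 1; 0; 0]; [:: 0; 0; 0; 0]; [:: 1; 0; 3; 1]; [:: 0; 1; 0; 1]] : seq (seq int)) i)`_j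
  | (true, true) => \matrix_(i < 4, j < 4) (
      nth [::] ([:: [:: 1; 0; 0; 0]; [:: 0; 1; 0; 0]; [:: 0; 0; 1; 0]; [:: 1; 1; 1; 3]] : seq (seq int)) i)`_j
  end.

Definition mxprod (w : seq (bool * bool)) : 'M[int]_4 :=
  \prod_(ab <- w) mxA ab.

Definition zero_row (M : 'M[int]_4) (i : 'I_4) : bool :=
  [forall j, M i j == 0].

(* Call a row of a matrix supported in a set S of column indices when its
   nonzero entries all lie in columns of S.  For entrywise nonnegative A and B
   no cancellation can occur in A *m B, so row i of A *m B vanishes exactly when
   row i of A is supported in the set of zero rows of B.  Each generator A_(a,b)
   has at most one row supported in any set of at most one index, so by
   induction on the word every product has at most one zero row. *)

From mathcomp Require Import all_boot all_order all_algebra.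
Set Implicit Arguments.
Unset Strict Implicit.
Unset Printing Implicit Defensive.
Import GRing.Theory Num.Theory.

Local Open Scope ring_scope.

Definition zero_rows (R : nmodType) m n (M : 'M[R]_(m, n)) : {set 'I_m} :=
  [set i | row i M == 0].

Definition supported_rows (R : nmodType) m n (A : 'M[R]_(m, n)) (S : {set 'I_n})
    : {set 'I_m} :=
  [set i | [forall k, (A i k != 0) ==> (k \in S)]].

Lemma zero_rows1 (R : nzRingType) n : zero_rows (1%:M : 'M[R]_n) = set0.
Proof.
apply/setP => i; rewrite !inE; apply/negP => /eqP/rowP/(_ i).
by rewrite !mxE eqxx => /eqP; rewrite oner_eq0.
Qed.

Lemma supported_rowsS (R : nmodType) m n (A : 'M[R]_(m, n)) (S T : {set 'I_n}) :
  S \subset T -> supported_rows A S \subset supported_rows A T.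
Proof.
move=> sST; apply/subsetP => i; rewrite !inE => /forallP suppS.
by apply/forallP => k; apply/implyP => /(implyP (suppS k)); apply: (subsetP sST).
Qed.

Lemma in_supported_rows1 (R : nmodType) m n (A : 'M[R]_(m, n)) k i :
  (i \in supported_rows A [set k]) = [forall l, (A i l != 0) ==> (l == k)].
Proof. by rewrite inE; apply: eq_forallb => l; rewrite in_set1. Qed.

Section NonnegativeMatrices.

Variable R : numDomainType.

Definition nonneg_mx m n (M : 'M[R]_(m, n)) := forall i j, 0 <= M i j.

Lemma mulmx_nonneg m n p (A : 'M[R]_(m, n)) (B : 'M[R]_(n, p)) :
  nonneg_mx A -> nonneg_mx B -> nonneg_mx (A *m B).
Proof.
by move=> A_ge0 B_ge0 i j; rewrite mxE; apply: sumr_ge0 => k _; apply: mulr_ge0.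
Qed.

Lemma zero_rows_mulmx m n p (A : 'M[R]_(m, n)) (B : 'M[R]_(n, p)) :
  nonneg_mx A -> nonneg_mx B ->
  zero_rows (A *m B) = supported_rows A (zero_rows B).
Proof.
move=> A_ge0 B_ge0; apply/setP => i; rewrite !inE.
apply/eqP/forallP => [ABi0 k|suppA].
  apply/implyP => Aik_neq0; rewrite inE; apply/eqP/rowP => j.
  have /rowP/(_ j)/eqP := ABi0; rewrite !mxE => /eqP/psumr_eq0P sum0.
  have /eqP := sum0 (fun l _ => mulr_ge0 (A_ge0 i l) (B_ge0 l j)) k isT.
  by rewrite mulf_eq0 (negbTE Aik_neq0) => /eqP.
apply/rowP => j; rewrite !mxE; apply: big1 => k _.
have [->|/(implyP (suppA k))] := eqVneq (A i k) 0; first by rewrite mul0r.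
by rewrite inE => /eqP/rowP/(_ j); rewrite !mxE => ->; rewrite mulr0.
Qed.

End NonnegativeMatrices.

Lemma zero_rowE (M : 'M[int]_4) i : zero_row M i = (i \in zero_rows M).
Proof.
rewrite inE; apply/forallP/eqP => [M_i0|/rowP M_i0 j].
  by apply/rowP => j; rewrite !mxE; apply/eqP.
by have := M_i0 j; rewrite !mxE => ->.
Qed.

Lemma mxA_nonneg ab : nonneg_mx (mxA ab).
Proof.
by move=> i j; case: ab i j => [[] []] [[|[|[|[|?]]]] ?] [[|[|[|[|?]]]] ?]; rewrite mxE.
Qed.

Lemma mxprod_cons ab w : mxprod (ab :: w) = mxA ab *m mxprod w.
Proof. by rewrite /mxprod big_cons mulmxE. Qed.

Lemma mxprod_nonneg w : nonneg_mx (mxprod w).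
Proof.
elim: w => [|ab w IHw]; first by move=> i j; rewrite /mxprod big_nil mxE ler0n.
by rewrite mxprod_cons; apply: mulmx_nonneg (mxA_nonneg ab) IHw.
Qed.

Lemma card_supported_rows_mxA_set1 ab k :
  (#|supported_rows (mxA ab) [set k]| <= 1)%N.
Proof.
apply/card_le1_eqP => i j; rewrite !in_supported_rows1 => /forallP Hi /forallP Hj.
have col c (c_lt4 : (c < 4)%N) := conj (Hi (Ordinal c_lt4)) (Hj (Ordinal c_lt4)).
apply/val_inj; move: (col 0%N isT) (col 1%N isT) (col 2%N isT) (col 3%N isT) => {col Hi Hj}.
move: ab k i j => [[] []] [[|[|[|[|//]]]] ?] [[|[|[|[|//]]]] ?] [[|[|[|[|//]]]] ?].
all: by rewrite !mxE; vm_compute => -[? ?] [? ?] [? ?] [? ?].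
Qed.

Lemma card_supported_rows_mxA ab (S : {set 'I_4}) :
  (#|S| <= 1)%N -> (#|supported_rows (mxA ab) S| <= 1)%N.
Proof.
move=> S_le1; have [k sSk] : exists k, S \subset [set k].
  have [->|[k Sk]] := set_0Vmem S; first by exists ord0; rewrite sub0set.
  by exists k; apply/subsetP => x; rewrite (card_le1P S_le1 k Sk x) inE.
exact: leq_trans (subset_leq_card (supported_rowsS _ sSk))
                 (card_supported_rows_mxA_set1 ab k).
Qed.

Theorem lemma7p2 (w : seq (bool * bool)) :
  (#|[pred i : 'I_4 | zero_row (mxprod w) i]| <= 1)%N.
Proof.
rewrite (eq_card (B := zero_rows (mxprod w))) => [|i]; last by rewrite inE /= zero_rowE.
elim: w => [|ab w IHw].
  by rewrite /mxprod big_nil zero_rows1 cards0.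
rewrite mxprod_cons (zero_rows_mulmx (mxA_nonneg ab) (mxprod_nonneg w)).
exact: card_supported_rows_mxA.
Qed.
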